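(* Assume (A9) of the context with constants $C_{\max}$ and $0<c<1$. Then for every $0<\epsilon<1-c$, with probability at least $1-\exp\big(-\frac{2n_q\epsilon^2}{C_{\max}^2}\big)$ over the sample $x_q^{(1)},\dots,x_q^{(n_q)}$, $$\sup_{x}\ \sup_{\delta\in\mathbb{R}^D:\|\delta\|\le\|\theta^*\|}\hat r(x;\theta^*+\delta)\le C'_{\mathrm{ratio}}:=\frac{C_{\max}}{1-c-\epsilon}<\infty.$$
   Context: $Q$ is a distribution on $\mathbb{R}^m$ with density $q$; $x_q^{(1)},\dots,x_q^{(n_q)}$ are i.i.d. from $Q$. $f:\mathbb{R}^m\to\mathbb{R}^D$ is a feature map; $r(x;\theta)=\exp(\theta^\top f(x))/N(\theta)$ with $N(\theta)=\mathbb{E}_{x\sim Q}[\exp(\theta^\top f(x))]$; $\hat N(\theta)=\frac1{n_q}\sum_i\exp(\theta^\top f(x_q^{(i)}))$; $\hat r(x;\theta)=\exp(\theta^\top f(x))/\hat N(\theta)$. $\theta^*\in\mathbb{R}^D$ is fixed; $\|\cdot\|$ is the Euclidean norm. (A9) For all $\delta$ with $\|\delta\|\le\|\theta^*\|$ and all $x$: $0<r(x;\theta^*+\delta)\le C_{\max}$; and $\mathbb{E}_{x\sim Q}\big[\inf_{\delta:\|\delta\|\le\|\theta^*\|}r(x;\theta^*+\delta)\big]\ge1-c$ for a constant $0<c<1$. *)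

From HB Require Import structures.
From mathcomp Require Import all_boot all_order all_algebra.
From mathcomp Require Import all_classical all_reals all_analysis.
Set Implicit Arguments. Unset Strict Implicit. Unset Printing Implicit Defensive.
Import Order.TTheory GRing.Theory Num.Theory.
Local Open Scope classical_set_scope.
Local Open Scope ring_scope.

(* R^m, as an alias of row vectors, equipped with a point so that it can carry
   a generated sigma-algebra. *)
Definition vecR (R : realType) (m : nat) := 'rV[R]_m.
HB.instance Definition _ (R : realType) (m : nat) := Choice.on (vecR R m).
HB.instance Definition _ (R : realType) (m : nat) := isPointed.Build (vecR R m) 0%R.

Section Defs.
Variable R : realType.

(* Generators of the Borel (product) sigma-algebra on R^m = 'rV[R]_m:
   preimages of Borel sets of R under the coordinate projections. *)
Definition coord_gen (m : nat) : set (set (vecR R m)) :=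
  [set A | exists (i : 'I_m) (B : set R), measurable B /\ A = (fun v : vecR R m => (v : 'rV[R]_m) ord0 i) @^-1` B].

Definition Rm (m : nat) : measurableType _ := g_sigma_algebraType (@coord_gen m).

Definition dotp (D : nat) (theta v : 'rV[R]_D) : R := \sum_(i < D) theta ord0 i * v ord0 i.

Definition enorm (D : nat) (v : 'rV[R]_D) : R := Num.sqrt (\sum_(i < D) v ord0 i ^+ 2).

Variables (m D : nat).

Definition Nfun (Q : probability (Rm m) R) (f : 'rV[R]_m -> 'rV[R]_D) (theta : 'rV[R]_D) : R :=
  fine (\int[Q]_x (expR (dotp theta (f x)))%:E)%E.

Definition rfun (Q : probability (Rm m) R) (f : 'rV[R]_m -> 'rV[R]_D) (theta : 'rV[R]_D)
  (x : 'rV[R]_m) : R := expR (dotp theta (f x)) / Nfun Q f theta.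

Definition Nhat (nq : nat) (xs : 'I_nq -> 'rV[R]_m) (f : 'rV[R]_m -> 'rV[R]_D) (theta : 'rV[R]_D) : R :=
  (\sum_(i < nq) expR (dotp theta (f (xs i)))) / nq%:R.

Definition rhat (nq : nat) (xs : 'I_nq -> 'rV[R]_m) (f : 'rV[R]_m -> 'rV[R]_D) (theta : 'rV[R]_D)
  (x : 'rV[R]_m) : R := expR (dotp theta (f x)) / Nhat xs f theta.

Definition assumption_A9 (Q : probability (Rm m) R) (f : 'rV[R]_m -> 'rV[R]_D)
  (theta_star : 'rV[R]_D) (Cmax c : R) : Prop :=
  (forall (delta : 'rV[R]_D) (x : 'rV[R]_m), enorm delta <= enorm theta_star ->
      0 < rfun Q f (theta_star + delta) x /\ rfun Q f (theta_star + delta) x <= Cmax) /\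
  ((1 - c)%:E <= \int[Q]_x
      (inf [set rfun Q f (theta_star + delta) x | delta in [set d | enorm d <= enorm theta_star]])%:E)%E.

End Defs.

Definition iid_sample (R : realType) (dO : measure_display) (Omega : measurableType dO)
  (P : probability Omega R) (m nq : nat) (Q : probability (Rm R m) R)
  (X : 'I_nq -> Omega -> Rm R m) : Prop :=
  (forall i, measurable_fun setT (X i)) /\
  (forall i (A : set (Rm R m)), measurable A -> P (X i @^-1` A) = Q A) /\
  (forall (S : {set 'I_nq}) (A : 'I_nq -> set (Rm R m)), (forall i, measurable (A i)) ->
     P (\bigcap_(i in [set j | j \in S]) (X i @^-1` A i)) = (\prod_(i in S) P (X i @^-1` A i))%E).

(* Let g(x) be the infimum of r(x; theta* + delta) over the ball ||delta|| <= ||theta*||.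
   By (A9), 0 <= g <= C_max and E_Q g >= 1 - c.  Since exp(theta^T f(x_i)) >= N(theta) g(x_i),
   an empirical mean of g of at least 1 - c - eps gives hat N(theta) >= (1 - c - eps) N(theta)
   for every theta in the ball, hence hat r <= C_max / (1 - c - eps); Hoeffding's inequality
   bounds the probability that the empirical mean falls short.  As g need not be measurable,
   the Chernoff bound is applied to nonnegative simple functions h_k <= g with
   E_Q h_k > 1 - c - 1/(k+1), where the moment generating function of the sample is an
   explicit finite sum over the level sets of h_k; the union of the good events over k has
   probability at least 1 - exp(-2 n_q eps^2 / C_max^2). *)

From HB Require Import structures.
From mathcomp Require Import all_boot all_order all_algebra.
From mathcomp Require Import all_classical all_reals all_analysis.
From mathcomp Require Import ring lra.
Import Order.TTheory GRing.Theory Num.Theory.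
Import HBNNSimple.
Local Open Scope classical_set_scope.
Local Open Scope ring_scope.

Set Implicit Arguments.
Unset Strict Implicit.
Unset Printing Implicit Defensive.

Lemma is_derive_le0_nincr (R : realType) (F F' : R -> R) (a b : R) :
  (forall x : R, is_derive x 1 F (F' x)) -> (forall x, a < x < b -> F' x <= 0) ->
  a <= b -> F b <= F a.
Proof.
move=> dF F'le0 ab.
have Fder x : derivable F x 1 by case: (dF x).
apply: (@ler0_derive1_nincr R F a b) => //.
- move=> x; rewrite in_itv /= => /andP[ax xb].
  by rewrite derive1E derive_val; apply: F'le0; rewrite ax xb.
- by apply: derivable_within_continuous => x _; exact: Fder.
Qed.

Section hoeffding_lemma.
Variables (R : realType) (p : R).
Hypotheses (p0 : 0 <= p) (p1 : p <= 1).

(* [G u + u^2/8] is the log-moment generating function of [p - Y] at [u], for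
   [Y] a Bernoulli(p) variable; [G] and its derivative [K] vanish at [0]. *)
Let B (y : R) := p + (1 - p) * expR y.
Let K (y : R) := p - y / 4 - p / B y.
Let G (y : R) := ln (B y) - y + p * y - y ^+ 2 / 8.
Let K' (y : R) := - 1/4 + p * (1 - p) * expR y / B y ^+ 2.

Let B_gt0 y : 0 < B y.
Proof.
rewrite /B; have [->|pn0] := eqVneq p 0; first by rewrite subr0 mul1r add0r expR_gt0.
have : 0 <= (1 - p) * expR y by rewrite mulr_ge0 ?subr_ge0 ?expR_ge0.
have : 0 < p by rewrite lt_def pn0 p0.
lra.
Qed.

Let B0 : B 0 = 1. Proof. by rewrite /B expR0; ring. Qed.

Let is_derive_B (x : R) : is_derive x 1 B ((1 - p) * expR x).
Proof. by apply: is_derive_eq; rewrite /GRing.scale /=; ring. Qed.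

Let is_derive_K (x : R) : is_derive x 1 K (K' x).
Proof.
have dBinv := is_deriveV (lt0r_neq0 (B_gt0 x)) (is_derive_B x).
rewrite /K /K'; apply: is_derive_eq; rewrite /GRing.scale /=.
by have := lt0r_neq0 (B_gt0 x); move: (B x) => b bn0; field.
Qed.

Let is_derive_G (x : R) : is_derive x 1 G (K x).
Proof.
have dlnB := is_derive1_comp (is_derive1_ln (B_gt0 x)) (is_derive_B x).
rewrite /G; apply: is_derive_eq.
by have := lt0r_neq0 (B_gt0 x); rewrite /K /B /GRing.scale /=; move: (expR x) => e bn0; field.
Qed.

(* [K' <= 0] is AM-GM: [4 p (1 - p) e <= (p + (1 - p) e)^2]. *)
Let K_le0 x : 0 <= x -> K x <= 0.
Proof.
move=> x0; have -> : 0 = K 0 by rewrite /K B0 invr1; ring.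
apply: (is_derive_le0_nincr is_derive_K) => // y _.
have := B_gt0 y; rewrite /K' /B; move: (expR y) => e Bp.
have -> : -1 / 4 + p * (1 - p) * e / (p + (1 - p) * e) ^+ 2
   = - ((p - (1 - p) * e) ^+ 2 / (4 * (p + (1 - p) * e) ^+ 2)).
  by field; exact: lt0r_neq0.
by rewrite oppr_le0 divr_ge0 ?sqr_ge0 // mulr_ge0 // sqr_ge0.
Qed.

Lemma hoeffding_lemma (u : R) : 0 <= u ->
  expR (p * u) * (1 - p + p * expR (- u)) <= expR (u ^+ 2 / 8).
Proof.
move=> u0.
have G_le0 : G u <= 0.
  have -> : 0 = G 0 by rewrite /G B0 ln1 expr0n /=; ring.
  by apply: (is_derive_le0_nincr is_derive_G) => // y /andP[y0 _]; exact/K_le0/ltW.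
have -> : 1 - p + p * expR (- u) = expR (- u) * B u.
  by rewrite /B expRN; have := lt0r_neq0 (expR_gt0 u); move: (expR u) => e en0; field.
rewrite mulrA -expRD -[B u]lnK ?posrE // -expRD ler_expR.
by move: G_le0; rewrite /G; lra.
Qed.

End hoeffding_lemma.

Lemma expRN_chord (R : realType) (s C y : R) : 0 < C -> 0 <= y <= C ->
  expR (- (s * y)) <= 1 - y / C + y / C * expR (- (s * C)).
Proof.
move=> C0 /andP[y0 yC].
have t0 : 0 <= y / C by rewrite divr_ge0 // ltW.
have t1 : y / C <= 1 by rewrite ler_pdivrMr // mul1r.
have := @convex_expR R (Itv01 t0 t1) (- (s * C)) 0.
rewrite !convRE /= /unstable.onem expR0 mulr0 addr0 mulr1.
have -> : y / C * - (s * C) = - (s * y) by field; exact: lt0r_neq0.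
lra.
Qed.

Section chernoff_discrete.
Variables (R : realType) (k : nat) (q v : 'I_k -> R).
Hypotheses (q_ge0 : forall j, 0 <= q j) (sum_q : \sum_j q j = 1).

Lemma sum_prod_low_le_mgf (n : nat) (thr s : R) : 0 <= s ->
  \sum_(t : {ffun 'I_n -> 'I_k} | \sum_i v (t i) < n%:R * thr) \prod_i q (t i)
  <= (\sum_j q j * expR (s * (thr - v j))) ^+ n.
Proof.
move=> s0; pose w j := q j * expR (s * (thr - v j)).
rewrite -[X in _ <= X ^+ n]/(\sum_j w j) -[n in _ ^+ n]card_ord -prodr_const.
rewrite bigA_distr_bigA /= big_mkcond /=; apply: ler_sum => t _.
have -> : \prod_i w (t i)
    = \prod_i q (t i) * expR (s * (n%:R * thr - \sum_i v (t i))).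
  rewrite big_split /= -expR_sum; congr (_ * expR _).
  rewrite (eq_bigr (fun i => s * thr - s * v (t i))); last by move=> i _; rewrite mulrBr.
  by rewrite sumrB sumr_const card_ord -mulr_natl -mulr_sumr; ring.
case: ifP => [low_t|_]; last by rewrite mulr_ge0 ?prodr_ge0 ?expR_ge0.
rewrite ler_peMr ?prodr_ge0 //.
have : 0 <= s * (n%:R * thr - \sum_i v (t i)) by rewrite mulr_ge0 // subr_ge0 ltW.
by move=> hpos; apply: le_trans (expR_ge1Dx _); lra.
Qed.

Variable C : R.
Hypotheses (C_gt0 : 0 < C) (v_bound : forall j, 0 <= v j <= C).

Let mean := \sum_j v j * q j.

Let mean_ge0 : 0 <= mean.
Proof. by apply: sumr_ge0 => j _; rewrite mulr_ge0 //; case/andP: (v_bound j). Qed.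

Let mean_le : mean <= C.
Proof.
apply: le_trans (_ : \sum_j C * q j <= _); last by rewrite -mulr_sumr sum_q mulr1.
by apply: ler_sum => j _; rewrite ler_wpM2r //; case/andP: (v_bound j).
Qed.

Lemma mgf_le_hoeffding (thr s : R) : 0 <= s ->
  \sum_j q j * expR (s * (thr - v j)) <= expR (s * (thr - mean) + (s * C) ^+ 2 / 8).
Proof.
move=> s0; set E := expR (- (s * C)).
have chord : \sum_j q j * expR (- (s * v j)) <= 1 - mean / C + mean / C * E.
  have -> : 1 - mean / C + mean / C * E = \sum_j (q j + v j * q j * ((E - 1) / C)).
    by rewrite big_split /= sum_q -mulr_suml -/mean; field; exact: lt0r_neq0.
  apply: ler_sum => j _.
  have -> : q j + v j * q j * ((E - 1) / C) = q j * (1 - v j / C + v j / C * E).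
    by field; exact: lt0r_neq0.
  by rewrite ler_wpM2l // expRN_chord.
have p0 : 0 <= mean / C by rewrite divr_ge0 // ltW.
have p1 : mean / C <= 1 by rewrite ler_pdivrMr // mul1r.
have := hoeffding_lemma p0 p1 (mulr_ge0 s0 (ltW C_gt0)); rewrite -/E.
have -> : mean / C * (s * C) = s * mean by field; exact: lt0r_neq0.
move=> hoeff.
have -> : \sum_j q j * expR (s * (thr - v j)) = expR (s * thr) * \sum_j q j * expR (- (s * v j)).
  by rewrite mulr_sumr; apply: eq_bigr => j _; rewrite mulrBr expRD mulrCA.
rewrite mulrBr !expRD -mulrA ler_pM2l ?expR_gt0 //; apply: le_trans chord _.
by rewrite -ler_pdivrMl ?expR_gt0 // -expRN opprK.
Qed.

End chernoff_discrete.

Lemma le_of_forall_le_mul_expR (R : realType) (a b L : R) : 0 < b -> 0 <= L ->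
  (forall k : nat, a <= b * expR (L / k.+1%:R)) -> a <= b.
Proof.
move=> b_gt0 L_ge0 hk; rewrite leNgt; apply/negP => ba.
have ln_ab_gt0 : 0 < ln (a / b) by rewrite ln_gt0 // ltr_pdivlMr // mul1r.
pose k := Num.Def.archi_bound (L / ln (a / b)).
have kP : L / ln (a / b) < k%:R by apply: archi_boundP; rewrite divr_ge0 // ltW.
have L_lt : L / k.+1%:R < ln (a / b).
  rewrite ltr_pdivrMr ?ltr0Sn // -ltr_pdivrMl // mulrC.
  by apply: (lt_le_trans kP); rewrite ler_nat.
have : expR (L / k.+1%:R) < a / b.
  by rewrite -[X in _ < X]lnK ?ltr_expR // posrE divr_gt0 // (lt_trans b_gt0).
by rewrite ltr_pdivlMr // mulrC ltNge hk.
Qed.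

Lemma ratio_le_of_mean_ge (R : realType) (n : nat) (a N C thr : R) (b : 'I_n -> R) :
  (0 < n)%N -> 0 < N -> 0 < thr -> 0 < a -> a / N <= C ->
  n%:R * thr <= \sum_i b i / N -> a / ((\sum_i b i) / n%:R) <= C / thr.
Proof.
move=> n_gt0 N_gt0 thr_gt0 a_gt0 aC hb.
have C_ge0 : 0 <= C by apply: le_trans aC; rewrite divr_ge0 // ltW.
rewrite -mulr_suml ler_pdivlMr // in hb.
rewrite ler_pdivrMr // in aC.
have n_gt0' : 0 < n%:R :> R by rewrite ltr0n.
have sum_gt0 : 0 < \sum_i b i by apply: lt_le_trans hb; rewrite !mulr_gt0.
rewrite invf_div mulrA ler_pdivrMr // mulrAC ler_pdivlMr //.
apply: le_trans (_ : C * N * n%:R * thr <= _).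
  by rewrite ler_wpM2r ?ler_wpM2r // ltW.
have -> : C * N * n%:R * thr = C * (n%:R * thr * N) by ring.
exact: ler_wpM2l.
Qed.

Lemma chernoff_exponent_le (R : realType) (n : nat) (C eps a mu z : R) :
  0 < C -> 0 <= eps -> a - z <= mu ->
  n%:R * (4 * eps / C ^+ 2 * (a - eps - mu) + (4 * eps / C ^+ 2 * C) ^+ 2 / 8)
  <= - (2 * n%:R * eps ^+ 2) / C ^+ 2 + n%:R * (4 * eps / C ^+ 2) * z.
Proof.
move=> C_gt0 eps_ge0 mu_ge; set s := 4 * eps / C ^+ 2.
have ns_ge0 : 0 <= n%:R * s by rewrite mulr_ge0 // divr_ge0 ?sqr_ge0 // mulr_ge0.
have -> : n%:R * (s * (a - eps - mu) + (s * C) ^+ 2 / 8)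
    = - (2 * n%:R * eps ^+ 2) / C ^+ 2 + n%:R * s * (a - mu).
  by rewrite /s; field; exact: lt0r_neq0.
by rewrite lerD2l ler_wpM2l // lerBlDr addrC -lerBlDr.
Qed.

Lemma measure_bigsetU_le (R : realType) d (T : measurableType d)
    (mu : {measure set T -> \bar R}) (I : Type) (s : seq I) (P : pred I) (F : I -> set T) :
  (forall i, measurable (F i)) ->
  (mu (\big[setU/set0]_(i <- s | P i) F i) <= \sum_(i <- s | P i) mu (F i))%E.
Proof.
move=> mF; elim: s => [|i s IH]; first by rewrite !big_nil measure0.
rewrite !big_cons; case: (P i) => //.
apply: le_trans (measureU2 _ (mF i) (bigsetU_measurable _ _)) _ => //.
exact: leeD.
Qed.

Lemma prob_bigcup_ge (R : realType) d (T : measurableType d) (P : probability T R)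
    (E : nat -> set T) (b L : R) : 0 < b -> 0 <= L -> (forall k, measurable (E k)) ->
  (forall k, ((1 - b * expR (L / k.+1%:R))%:E <= P (E k))%E) ->
  ((1 - b)%:E <= P (\bigcup_k E k))%E.
Proof.
move=> b_gt0 L_ge0 mE PE_ge.
have mU : measurable (\bigcup_k E k) by exact: bigcupT_measurable.
rewrite -(fineK (fin_num_measure P _ mU)) lee_fin lerBlDr -lerBlDl.
apply: (le_of_forall_le_mul_expR b_gt0 L_ge0) => k.
have PEk_le : fine (P (E k)) <= fine (P (\bigcup_k E k)).
  by apply: fine_le; rewrite ?fin_num_measure //; apply: le_measure; rewrite ?inE // => w; exists k.
have := PE_ge k; rewrite -(fineK (fin_num_measure P _ (mE k))) lee_fin.
lra.
Qed.

Section simple_function_levels.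
Variables (R : realType) (d : measure_display) (T : measurableType d).
Variables (mu : probability T R) (h : {nnsfun T >-> R}).

Let range_fin : finite_set (range h) := fimfunP h.

Definition sf_levels : seq R := finmap.enum_fset (fset_set (range h)).
Definition sf_nlevels : nat := size sf_levels.
Definition sf_level (j : 'I_sf_nlevels) : R := nth 0 sf_levels j.
Definition sf_level_prob (j : 'I_sf_nlevels) : R := fine (mu (h @^-1` [set sf_level j])).

Lemma mem_sf_levels x : (x \in sf_levels) = (x \in range h).
Proof. by rewrite -(in_fset_set range_fin). Qed.

Lemma sf_level_range j : range h (sf_level j).
Proof. by have := mem_sf_levels (sf_level j); rewrite mem_nth // => /esym/set_mem. Qed.

Lemma fsbig_range_sf_levels (F : R -> \bar R) : (forall x, F x \is a fin_num) ->
  (\sum_(x \in range h) F x)%E = (\sum_(j < sf_nlevels) fine (F (sf_level j)))%:E.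
Proof.
move=> Ffin; rewrite (fsbig_finite _ _ range_fin) (big_nth 0) big_mkord -sumEFin.
by apply: eq_bigr => j _; rewrite fineK.
Qed.

Lemma measurable_sf_level_set x : measurable (h @^-1` [set x]).
Proof. by apply: measurable_funPTI; exact: measurable_set1. Qed.

Lemma fin_num_sf_level_set x : mu (h @^-1` [set x]) \is a fin_num.
Proof. exact/fin_num_measure/measurable_sf_level_set. Qed.

Lemma sf_level_prob_ge0 j : 0 <= sf_level_prob j.
Proof. by rewrite fine_ge0. Qed.

Lemma sum_sf_level_prob : \sum_(j < sf_nlevels) sf_level_prob j = 1.
Proof.
apply: EFin_inj; rewrite -(@fsbig_range_sf_levels (fun x => mu (h @^-1` [set x]))); last first.
  exact: fin_num_sf_level_set.
rewrite -(measure_fin_bigcup mu range_fin (@trivIset_preimage1 _ _ (range h) h)); last first.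
  by move=> x _; exact: measurable_sf_level_set.
rewrite [X in _ X = _](_ : _ = setT); first exact: probability_setT.
by apply/seteqP; split => // y _; exists (h y) => //; exists y.
Qed.

Lemma sintegral_sf_levels :
  sintegral mu h = (\sum_(j < sf_nlevels) sf_level j * sf_level_prob j)%:E.
Proof.
rewrite sintegralE fsbig_range_sf_levels; last by move=> x; rewrite fin_numM // fin_num_sf_level_set.
by congr (_ %:E); apply: eq_bigr => j _; rewrite fineM // fin_num_sf_level_set.
Qed.

End simple_function_levels.
Arguments sf_level {R d T} h j.
Arguments sf_level_prob {R d T} mu h j.

Section iid_level_events.
Variables (R : realType) (m nq : nat) (dO : measure_display) (Omega : measurableType dO).
Variables (P : probability Omega R) (Q : probability (Rm R m) R) (X : 'I_nq -> Omega -> Rm R m).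
Hypothesis hX : iid_sample P Q X.
Variable h : {nnsfun Rm R m >-> R}.

Lemma measurable_sample_preimage i (A : set (Rm R m)) : measurable A -> measurable (X i @^-1` A).
Proof. by move=> mA; have := hX.1 i measurableT A mA; rewrite setTI. Qed.

Definition sample_level_event (t : {ffun 'I_nq -> 'I_(sf_nlevels h)}) : set Omega :=
  \bigcap_(i in [set j | j \in setTfor 'I_nq]) (X i @^-1` (h @^-1` [set sf_level h (t i)])).

Lemma measurable_sample_level_event t : measurable (sample_level_event t).
Proof.
apply: fin_bigcap_measurable; first exact: finite_finset.
by move=> i _; apply/measurable_sample_preimage/measurable_sf_level_set.
Qed.

Lemma prob_sample_level_event t :
  P (sample_level_event t) = (\prod_i sf_level_prob Q h (t i))%:E.
Proof.
have [_ [hlaw hindep]] := hX.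
rewrite /sample_level_event hindep; last by move=> i; exact: measurable_sf_level_set.
rewrite -prodEFin; apply: eq_big => [i|i _]; first exact: finset.in_setT.
by rewrite hlaw ?fineK ?fin_num_sf_level_set ?measurable_sf_level_set.
Qed.

Variable thr : R.

Definition low_levels (t : {ffun 'I_nq -> 'I_(sf_nlevels h)}) : bool :=
  \sum_i sf_level h (t i) < nq%:R * thr.

Definition low_mean_event : set Omega :=
  \big[setU/set0]_(t | low_levels t) sample_level_event t.

Lemma measurable_low_mean_event : measurable low_mean_event.
Proof. by apply: bigsetU_measurable => t _; exact: measurable_sample_level_event. Qed.

Lemma prob_low_mean_event_le :
  (P low_mean_event <= (\sum_(t | low_levels t) \prod_i sf_level_prob Q h (t i))%:E)%E.
Proof.
apply: le_trans (@measure_bigsetU_le _ _ _ P _ _ low_levels _ measurable_sample_level_event) _.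
by rewrite -sumEFin le_eqVlt (eq_bigr _ (fun t _ => prob_sample_level_event t)) eqxx.
Qed.

Lemma sample_sum_ge w : ~ low_mean_event w -> nq%:R * thr <= \sum_i h (X i w).
Proof.
move=> not_low; rewrite leNgt; apply/negP => hlt; apply: not_low.
have level_idx i : (index (h (X i w)) (sf_levels h) < sf_nlevels h)%N.
  by rewrite index_mem mem_sf_levels inE; exists (X i w).
pose t := [ffun i => Ordinal (level_idx i)].
have level_t i : sf_level h (t i) = h (X i w).
  by rewrite /sf_level ffunE /= nth_index // mem_sf_levels inE; exists (X i w).
have low_t : low_levels t by rewrite /low_levels (eq_bigr _ (fun i _ => level_t i)).
rewrite /low_mean_event (big_rem t) ?mem_index_enum // low_t; left.
by move=> i _ /=; rewrite /preimage /= level_t.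
Qed.

Lemma chernoff_sfun_sample (C s : R) : 0 < C -> (forall x, h x <= C) -> 0 <= s ->
  exists E : set Omega, measurable E /\
    ((1 - expR (nq%:R * (s * (thr - fine (sintegral Q h)) + (s * C) ^+ 2 / 8)))%:E <= P E)%E /\
    (forall w, E w -> nq%:R * thr <= \sum_i h (X i w)).
Proof.
move=> C_gt0 h_le s0; exists (~` low_mean_event).
split; first exact/measurableC/measurable_low_mean_event.
split; last by move=> w; exact: sample_sum_ge.
rewrite probability_setC ?EFinB; last exact: measurable_low_mean_event.
apply: leeB => //; apply: le_trans prob_low_mean_event_le _.
rewrite lee_fin sintegral_sf_levels /= expRM_natl.
apply: le_trans (sum_prod_low_le_mgf _ (sf_level_prob_ge0 Q (h:=h)) _ _ s0) _.
apply: lerXn2r; rewrite ?nnegrE ?expR_ge0 //.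
  by apply: sumr_ge0 => j _; rewrite mulr_ge0 ?sf_level_prob_ge0 ?expR_ge0.
apply: (mgf_le_hoeffding (sf_level_prob_ge0 Q (h:=h)) (sum_sf_level_prob Q h)) => // j.
by have [x _ <-] := sf_level_range j; rewrite fun_ge0 h_le.
Qed.

End iid_level_events.

Section ball_min_ratio.
Variables (R : realType) (m D : nat) (Q : probability (Rm R m) R).
Variables (f : 'rV[R]_m -> 'rV[R]_D) (theta_star : 'rV[R]_D) (Cmax c : R).
Hypothesis hA9 : assumption_A9 Q f theta_star Cmax c.

Let ball : set 'rV[R]_D := [set d | enorm d <= enorm theta_star].

Definition ball_min_ratio (x : 'rV[R]_m) : R :=
  inf [set rfun Q f (theta_star + delta) x | delta in ball].

Let ball0 : ball 0.
Proof.
rewrite /ball /= /enorm (eq_bigr (fun _ => 0)); last by move=> i _; rewrite mxE expr0n.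
by rewrite big1_eq sqrtr0 sqrtr_ge0.
Qed.

Lemma ball_min_ratio_le x delta : enorm delta <= enorm theta_star ->
  ball_min_ratio x <= rfun Q f (theta_star + delta) x.
Proof.
move=> hdelta; apply: ge_inf; last by exists delta.
by exists 0 => y [d hd <-]; exact: ltW (hA9.1 d x hd).1.
Qed.

Lemma ball_min_ratio_ge0 x : 0 <= ball_min_ratio x.
Proof.
apply: lb_le_inf; first by exists (rfun Q f (theta_star + 0) x); exists 0.
by move=> y [d hd <-]; exact: ltW (hA9.1 d x hd).1.
Qed.

Lemma ball_min_ratio_le_Cmax x : ball_min_ratio x <= Cmax.
Proof. exact: le_trans (ball_min_ratio_le x ball0) (hA9.1 0 x ball0).2. Qed.

Lemma Cmax_gt0 : 0 < Cmax.
Proof. exact: lt_le_trans (hA9.1 0 0 ball0).1 (hA9.1 0 0 ball0).2. Qed.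

(* [ball_min_ratio] need not be measurable, but its integral is by definition
   the supremum of the integrals of the simple functions below it. *)
Lemma sfun_below_ball_min_ratio (z : R) : 0 < z ->
  exists h : {nnsfun Rm R m >-> R},
    (forall x, h x <= ball_min_ratio x) /\ (1 - c - z < fine (sintegral Q h)).
Proof.
move=> z_gt0; have := hA9.2; rewrite -/ball -/(ball_min_ratio _).
rewrite ge0_integralTE; last by move=> x; rewrite lee_fin ball_min_ratio_ge0.
have : ((1 - c - z)%:E < (1 - c)%:E)%E by rewrite lte_fin gtrDl oppr_lt0.
move=> /lt_le_trans hlt /hlt /ereal_sup_gt [_ [h h_le <-] hz].
exists h; split; first by move=> x; have := h_le x; rewrite lee_fin.
by rewrite sintegral_sf_levels /= in hz *; rewrite -lte_fin.
Qed.

Lemma rhat_le_of_mean_ge (nq : nat) (xs : 'I_nq -> 'rV[R]_m) (thr : R) :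
  (0 < nq)%N -> 0 < thr -> nq%:R * thr <= \sum_i ball_min_ratio (xs i) ->
  forall x delta, enorm delta <= enorm theta_star ->
    rhat xs f (theta_star + delta) x <= Cmax / thr.
Proof.
move=> nq_gt0 thr_gt0 hmean x delta hdelta.
have [r_gt0 r_le] := hA9.1 delta x hdelta.
have N_gt0 : 0 < Nfun Q f (theta_star + delta).
  by move: r_gt0; rewrite /rfun pmulr_rgt0 ?expR_gt0 // invr_gt0.
apply: (ratio_le_of_mean_ge nq_gt0 N_gt0 thr_gt0 (expR_gt0 _) r_le).
by apply: le_trans hmean _; apply: ler_sum => i _; exact: ball_min_ratio_le.
Qed.

End ball_min_ratio.

Theorem proposition9 (R : realType) (m D nq : nat)
  (Q : probability (Rm R m) R) (f : 'rV[R]_m -> 'rV[R]_D)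
  (f_meas : forall j : 'I_D, measurable_fun setT (fun x : Rm R m => f x ord0 j))
  (theta_star : 'rV[R]_D) (Cmax c : R)
  (hc0 : 0 < c) (hc1 : c < 1)
  (hA9 : assumption_A9 Q f theta_star Cmax c)
  (hnq : (0 < nq)%N)
  (dO : measure_display) (Omega : measurableType dO) (P : probability Omega R)
  (X : 'I_nq -> Omega -> Rm R m)
  (hX : iid_sample P Q X)
  (eps : R) (heps0 : 0 < eps) (heps1 : eps < 1 - c) :
  exists E : set Omega, measurable E /\
    ((1 - expR (- (2 * nq%:R * eps ^+ 2) / Cmax ^+ 2))%:E <= P E)%E /\
    (forall w, E w ->
       forall (x : 'rV[R]_m) (delta : 'rV[R]_D), enorm delta <= enorm theta_star ->
         rhat (fun i => X i w) f (theta_star + delta) x <= Cmax / (1 - c - eps)).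
Proof.
pose thr := 1 - c - eps.
(* [s] minimises the Chernoff exponent [- s eps + (s Cmax)^2 / 8]. *)
pose s := 4 * eps / Cmax ^+ 2.
have Cmax_gt0 := Cmax_gt0 hA9.
have s_ge0 : 0 <= s by rewrite divr_ge0 ?sqr_ge0 // mulr_ge0 // ltW.
have thr_gt0 : 0 < thr by rewrite /thr subr_gt0.
have /choice[h h_spec] : forall k : nat, exists h : {nnsfun Rm R m >-> R},
    (forall x, h x <= ball_min_ratio Q f theta_star x) /\ 1 - c - k.+1%:R^-1 < fine (sintegral Q h).
  by move=> k; apply: (sfun_below_ball_min_ratio hA9); rewrite invr_gt0.
have h_le_Cmax k x : h k x <= Cmax.
  exact: le_trans ((h_spec k).1 x) (ball_min_ratio_le_Cmax hA9 x).
have /choice[E E_spec] := fun k => chernoff_sfun_sample hX (h := h k) thr Cmax_gt0 (h_le_Cmax k) s_ge0.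
exists (\bigcup_k E k); split; first by apply: bigcupT_measurable => k; exact: (E_spec k).1.
split; last first.
  move=> w [k _ Ekw]; apply: (rhat_le_of_mean_ge hA9 hnq thr_gt0).
  apply: le_trans ((E_spec k).2.2 w Ekw) _.
  by apply: ler_sum => i _; exact: (h_spec k).1.
apply: (prob_bigcup_ge (expR_gt0 _) (mulr_ge0 (ler0n _ nq) s_ge0) (fun k => (E_spec k).1)) => k.
apply: le_trans (E_spec k).2.1; rewrite lee_fin lerD2l lerN2 -expRD ler_expR.
by apply: chernoff_exponent_le => //; [exact: ltW | exact/ltW/(h_spec k).2].
Qed.
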